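(* Let $Q$ be a Moufang loop. For all $a,x,y\in Q$ and all $i,j\in\mathbb Z$: $$a^{3i}x\cdot a^{3j}y=a^{3(i+j)}T_a^{-i-2j}\big(T_a^{i-j}(x)T_a^{i+2j}(y)\big)=T_a^{2i+j}\big(T_a^{i-j}(x)T_a^{i+2j}(y)\big)a^{3(i+j)},$$ $$a^{3i}x\cdot ya^{3j}=a^{3(i+j)}T_a^{-i-2j}\big(T_a^{i-j}(x)T_a^{i-j}(y)\big)=T_a^{2i+j}\big(T_a^{i-j}(x)T_a^{i-j}(y)\big)a^{3(i+j)},$$ $$xa^{3i}\cdot a^{3j}y=a^{3(i+j)}T_a^{-i-2j}\big(T_a^{-2i-j}(x)T_a^{i+2j}(y)\big)=T_a^{2i+j}\big(T_a^{-2i-j}(x)T_a^{i+2j}(y)\big)a^{3(i+j)},$$ $$xa^{3i}\cdot ya^{3j}=a^{3(i+j)}T_a^{-i-2j}\big(T_a^{-2i-j}(x)T_a^{i-j}(y)\big)=T_a^{2i+j}\big(T_a^{-2i-j}(x)T_a^{i-j}(y)\big)a^{3(i+j)}.$$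
   Context: A loop is Moufang if it satisfies $xy\cdot zx=(x\cdot yz)x$ for all $x,y,z$; Moufang loops are diassociative, so powers $a^k$ are well defined. $T_a=R_a^{-1}L_a$ where $L_a(y)=ay$, $R_a(y)=ya$; thus $T_a(x)=axa^{-1}$, and $T_a^k$ denotes the $k$-th power (inverse for negative $k$) of this permutation. Juxtaposition $uv$ binds tighter than $\cdot$. *)

From mathcomp Require Import all_boot all_algebra.
Set Implicit Arguments. Unset Strict Implicit. Unset Printing Implicit Defensive.

(* A loop, given equationally: a set with a binary operation, a two-sided
   identity, and left/right divisions (so every equation a*x=b, y*a=b has a
   unique solution). *)
Record loop := Loop {
  lcarrier :> Type;
  lmul : lcarrier -> lcarrier -> lcarrier;
  lone : lcarrier;
  lldiv : lcarrier -> lcarrier -> lcarrier;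
  lrdiv : lcarrier -> lcarrier -> lcarrier;  (* lrdiv b a = b / a *)
  lmul1x : forall x, lmul lone x = x;
  lmulx1 : forall x, lmul x lone = x;
  lldivK : forall a b, lldiv a (lmul a b) = b;
  lmulldiv : forall a b, lmul a (lldiv a b) = b;
  lrdivK : forall a b, lrdiv (lmul b a) a = b;
  lmulrdiv : forall a b, lmul (lrdiv b a) a = b
}.

Definition moufang (Q : loop) : Prop :=
  forall x y z : Q,
    lmul (lmul x y) (lmul z x) = lmul (lmul x (lmul y z)) x.

(* Powers a^k, k : int.  (Moufang loops are diassociative, so any
   bracketing gives the same value.)  a^n = a(a(...(a e))),
   a^{-n} = a^{-1}(...(a^{-1} e)) with a^{-1} = a \ e. *)
Definition linv (Q : loop) (a : Q) : Q := lldiv a (lone Q).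

Definition lpow (Q : loop) (a : Q) (k : int) : Q :=
  match k with
  | Posz n => iter n (lmul a) (lone Q)
  | Negz n => iter n.+1 (lmul (linv a)) (lone Q)
  end.

Definition T (Q : loop) (a x : Q) : Q := lrdiv (lmul a x) a.
Definition Tinv (Q : loop) (a x : Q) : Q := lldiv a (lmul x a).

Definition Tpow (Q : loop) (a : Q) (k : int) (x : Q) : Q :=
  match k with
  | Posz n => iter n (T a) x
  | Negz n => iter n.+1 (Tinv a) x
  end.

From mathcomp Require Import all_boot all_algebra zify.
Import GRing.Theory.
Local Open Scope ring_scope.

(* Let L and R be left and right multiplication by a. By flexibility
   (a(za) = (az)a) they commute, so every word in L, R and their inverses is
   some L^p R^q; in particular T_a^k = L^k R^-k, a^k x = L^k x and
   x a^k = R^k x. The Moufang law a(uv) = (aua)(a^-1 v) iterates to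
   L^n(uv) = (L^n R^n u)(L^-n v), and dually R^n(uv) = (R^-n u)(L^n R^n v).
   Hence both sides of each identity normalize to (L^p R^q x)(L^r R^s y),
   and it only remains to compare integer exponents. *)

Lemma int_succ_pred_ind (P : int -> Prop) :
  P 0 -> (forall k, P k -> P (k + 1)) -> (forall k, P k -> P (k - 1)) ->
  forall k, P k.
Proof.
move=> P0 PS PP; elim/int_rect => [|n|n] // Pn.
  by rewrite -[n.+1]addn1 PoszD; apply: PS.
by rewrite -[n.+1]addn1 PoszD opprD; apply: PP.
Qed.

Set Implicit Arguments.
Section IterInt.
Variables (X : Type) (f g : X -> X).
Hypotheses (fK : cancel g f) (gK : cancel f g).

Definition iterz (k : int) (x : X) : X :=
  match k with Posz n => iter n f x | Negz n => iter n.+1 g x end.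

Lemma iterzS k x : iterz (k + 1) x = f (iterz k x).
Proof.
case: k => [n|[|n]].
- by rewrite -[1]/(Posz 1) -PoszD addn1.
- by rewrite /= fK.
- have -> : Negz n.+1 + 1 = Negz n by lia.
  by rewrite /= fK.
Qed.

Lemma iterzB1 k x : iterz (k - 1) x = g (iterz k x).
Proof. by rewrite -{2}(subrK 1 k) iterzS gK. Qed.

Lemma iterzD m n x : iterz (m + n) x = iterz m (iterz n x).
Proof.
elim/int_succ_pred_ind: m x => [|m IH|m IH] x; first by rewrite add0r.
  by rewrite addrAC iterzS IH iterzS.
by rewrite addrAC iterzB1 IH iterzB1.
Qed.

Lemma iterz_comm (h : X -> X) : (forall x, h (f x) = f (h x)) ->
  forall k x, iterz k (h x) = h (iterz k x).
Proof.
move=> hf; have hg x : h (g x) = g (h x) by rewrite -{2}(fK x) hf gK.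
elim/int_succ_pred_ind => [|k IH|k IH] x //; first by rewrite !iterzS IH hf.
by rewrite !iterzB1 IH hg.
Qed.

End IterInt.
Unset Implicit Arguments.

Section MoufangIdentities.
Context {Q : loop} (HM : moufang Q).
Local Notation "x ** y" := (lmul x y) (at level 40, left associativity).
Local Notation "1" := (lone Q).
Local Notation inv := (@linv Q).

Lemma lmulIl (a x y : Q) : a ** x = a ** y -> x = y.
Proof. by move=> h; rewrite -(lldivK a x) h lldivK. Qed.

Lemma lmulIr (a x y : Q) : x ** a = y ** a -> x = y.
Proof. by move=> h; rewrite -(lrdivK a x) h lrdivK. Qed.

Lemma lflexible (x z : Q) : x ** (z ** x) = (x ** z) ** x.
Proof. by have := HM x 1 z; rewrite lmulx1 lmul1x. Qed.

Lemma lmulxV (x : Q) : x ** inv x = 1.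
Proof. exact: lmulldiv. Qed.

Lemma lmulVK (x z : Q) : x ** (inv x ** z) = z.
Proof. by apply: (lmulIr x); rewrite -HM lmulxV lmul1x. Qed.

Lemma lmulK (x z : Q) : inv x ** (x ** z) = z.
Proof. by apply: (lmulIl x); rewrite lmulVK. Qed.

Lemma lmulVx (x : Q) : inv x ** x = 1.
Proof. by apply: (lmulIl x); rewrite lflexible lmulxV lmul1x lmulx1. Qed.

Lemma lmulrVK (x z : Q) : (z ** inv x) ** x = z.
Proof. by apply: (lmulIl x); rewrite lflexible -HM lmulVx lmulx1. Qed.

Lemma lmulrK (x z : Q) : (z ** x) ** inv x = z.
Proof. by apply: (lmulIr x); rewrite lmulrVK. Qed.

Lemma linvM (x y : Q) : inv (x ** y) = inv y ** inv x.
Proof.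
have h : inv (x ** y) ** x = inv y by rewrite -{2}(lmulrK y x) lmulK.
by rewrite -h lmulrK.
Qed.

Lemma linvK (x : Q) : inv (inv x) = x.
Proof. by apply: (lmulIl (inv x)); rewrite lmulxV lmulVx. Qed.

Lemma lmul_left_split (a x y : Q) : a ** (x ** y) = ((a ** x) ** a) ** (inv a ** y).
Proof.
have h := HM a (x ** y) (inv y); rewrite lmulrK in h.
by rewrite -h -[inv a ** y]linvK linvM linvK lmulrK.
Qed.

Lemma lmul_right_split (a x y : Q) : (x ** y) ** a = (x ** inv a) ** ((a ** y) ** a).
Proof.
have h := HM a (inv x) (x ** y); rewrite lmulK in h.
by rewrite -h -[x ** inv a]linvK linvM linvK lmulK.
Qed.

Lemma left_moufang (a x z : Q) : ((a ** x) ** a) ** z = a ** (x ** (a ** z)).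
Proof. by rewrite (lmul_left_split a x) lmulK. Qed.

Lemma right_moufang (a x y : Q) : x ** ((a ** y) ** a) = ((x ** a) ** y) ** a.
Proof. by rewrite (lmul_right_split a (x ** a)) lmulrK. Qed.

Lemma iter_lmul1C (b : Q) n : iter n (lmul b) 1 ** b = b ** iter n (lmul b) 1.
Proof. by elim: n => [|n IH] /=; rewrite ?lmul1x ?lmulx1 // -lflexible IH. Qed.

Lemma iter_lmul1S (b : Q) n :
  b ** (b ** iter n (lmul b) 1) = (b ** iter n (lmul b) 1) ** b.
Proof. by rewrite -[in LHS]iter_lmul1C lflexible. Qed.

(* Strengthened to two consecutive exponents, since the left Moufang law
   peels two factors b off at once. *)
Lemma iter_lmul1_mull (b : Q) n x : iter n (lmul b) 1 ** x = iter n (lmul b) x.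
Proof.
suff : iter n (lmul b) 1 ** x = iter n (lmul b) x /\
       iter n.+1 (lmul b) 1 ** x = iter n.+1 (lmul b) x by case.
elim: n x => [|n IH] x /=; first by rewrite lmul1x lmulx1.
split; first by case: (IH x).
by rewrite iter_lmul1S left_moufang (proj1 (IH _)) -iterSr.
Qed.

Lemma iter_lmul1_mulr (b : Q) n x :
  x ** iter n (lmul b) 1 = iter n (fun z => z ** b) x.
Proof.
suff : x ** iter n (lmul b) 1 = iter n (fun z => z ** b) x /\
       x ** iter n.+1 (lmul b) 1 = iter n.+1 (fun z => z ** b) x by case.
elim: n x => [|n IH] x /=; first by rewrite !lmulx1.
split; first by case: (IH x).
by rewrite iter_lmul1S right_moufang (proj1 (IH _)) -iterSr.
Qed.

End MoufangIdentities.

Section LeftRightTranslations.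
Context {Q : loop} (HM : moufang Q).
Variable a : Q.
Local Notation "x ** y" := (lmul x y) (at level 40, left associativity).
Local Notation ai := (linv a).

Definition Lpow := iterz (lmul a) (lmul ai).
Definition Rpow := iterz (fun z => z ** a) (fun z => z ** ai).
Definition LR p q (x : Q) := Lpow p (Rpow q x).

Let LK := lmulVK HM a.
Let LVK := lmulK HM a.
Let RK := lmulrVK HM a.
Let RVK := lmulrK HM a.

Lemma LpowS k x : Lpow (k + 1) x = a ** Lpow k x. Proof. exact: (iterzS LK). Qed.
Lemma LpowB1 k x : Lpow (k - 1) x = ai ** Lpow k x. Proof. exact: (iterzB1 LK LVK). Qed.
Lemma RpowS k x : Rpow (k + 1) x = Rpow k x ** a. Proof. exact: (iterzS RK). Qed.
Lemma RpowB1 k x : Rpow (k - 1) x = Rpow k x ** ai. Proof. exact: (iterzB1 RK RVK). Qed.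
Lemma LpowD m n x : Lpow (m + n) x = Lpow m (Lpow n x). Proof. exact: (iterzD LK LVK). Qed.
Lemma RpowD m n x : Rpow (m + n) x = Rpow m (Rpow n x). Proof. exact: (iterzD RK RVK). Qed.

Lemma Rpow_lmul k x : Rpow k (a ** x) = a ** Rpow k x.
Proof. by apply: (iterz_comm RK RVK) => y; apply: lflexible. Qed.

Lemma Lpow_rmul k x : Lpow k (x ** a) = Lpow k x ** a.
Proof.
by apply: (iterz_comm LK LVK (fun z => z ** a)) => y; rewrite lflexible.
Qed.

Lemma LpowRpowC k l x : Lpow k (Rpow l x) = Rpow l (Lpow k x).
Proof. by apply: (iterz_comm LK LVK (Rpow l)) => y; apply: Rpow_lmul. Qed.

Lemma LR_comp p q r s x : LR p q (LR r s x) = LR (p + r) (q + s) x.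
Proof. by rewrite /LR LpowRpowC RpowD -LpowRpowC LpowD -LpowRpowC. Qed.

Lemma LR_lmul p q x : a ** LR p q x = LR (p + 1) q x.
Proof. by rewrite /LR LpowS. Qed.

Lemma LR_lmulV p q x : ai ** LR p q x = LR (p - 1) q x.
Proof. by rewrite /LR LpowB1. Qed.

Lemma LR_rmul p q x : LR p q x ** a = LR p (q + 1) x.
Proof. by rewrite /LR -Lpow_rmul RpowS. Qed.

Lemma LR_rmulV p q x : LR p q x ** ai = LR p (q - 1) x.
Proof. by apply: (lmulIr a); rewrite RK LR_rmul subrK. Qed.

Lemma TE x : T a x = (a ** x) ** ai.
Proof. by rewrite /T -{1}(RK (a ** x)) lrdivK. Qed.

Lemma TinvE x : Tinv a x = ai ** (x ** a).
Proof. by rewrite /Tinv -{1}(LK (x ** a)) lldivK. Qed.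

Lemma Tpow_LR k x : Tpow a k x = LR k (- k) x.
Proof.
have TK : cancel (Tinv a) (T a) by move=> y; rewrite TE TinvE LK RVK.
have TVK : cancel (T a) (Tinv a) by move=> y; rewrite TE TinvE RK LVK.
have -> : Tpow a k x = iterz (T a) (Tinv a) k x by case: k.
elim/int_succ_pred_ind: k x => [|k IH|k IH] x //.
  by rewrite (iterzS TK) IH TE LR_lmul LR_rmulV opprD.
rewrite (iterzB1 TK TVK) IH TinvE LR_rmul LR_lmulV.
by congr (LR _ _ _); lia.
Qed.

Lemma Lpow_mul n u v : Lpow n (u ** v) = LR n n u ** Lpow (- n) v.
Proof.
elim/int_succ_pred_ind: n u v => [|n IH|n IH] u v //.
  by rewrite LpowS IH lmul_left_split // LR_lmul LR_rmul -LpowB1 opprD.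
rewrite LpowB1 IH lmul_left_split // linvK // LR_lmulV LR_rmulV -LpowS.
by congr (_ ** Lpow _ _); lia.
Qed.

Lemma Rpow_mul n u v : Rpow n (u ** v) = Rpow (- n) u ** LR n n v.
Proof.
elim/int_succ_pred_ind: n u v => [|n IH|n IH] u v //.
  by rewrite RpowS IH lmul_right_split // LR_lmul LR_rmul -RpowB1 opprD.
rewrite RpowB1 IH lmul_right_split // linvK // LR_lmulV LR_rmulV -RpowS.
by congr (Rpow _ _ ** _); lia.
Qed.

Lemma LR_mul p q u v : LR p q (u ** v) = LR p p (LR 0 (- q) u) ** LR (- p) 0 (LR q q v).
Proof. by rewrite {1}/LR Rpow_mul Lpow_mul. Qed.

Lemma lpow_mull k x : lpow a k ** x = LR k 0 x.
Proof. by case: k => n; [exact: (iter_lmul1_mull HM a n) | exact: (iter_lmul1_mull HM ai n.+1)]. Qed.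

Lemma lpow_mulr k x : x ** lpow a k = LR 0 k x.
Proof. by case: k => n; [exact: (iter_lmul1_mulr HM a n) | exact: (iter_lmul1_mulr HM ai n.+1)]. Qed.

End LeftRightTranslations.

Theorem mainTheorem10 (Q : loop) (HM : moufang Q) (a x y : Q) (i j : int) :
  let m := @lmul Q in
  let p := @lpow Q a in
  let Ta := @Tpow Q a in
  (* a^{3i}x . a^{3j}y *)
  (m (m (p (3 * i)) x) (m (p (3 * j)) y)
     = m (p (3 * (i + j))) (Ta (- i - 2 * j) (m (Ta (i - j) x) (Ta (i + 2 * j) y)))
   /\ m (p (3 * (i + j))) (Ta (- i - 2 * j) (m (Ta (i - j) x) (Ta (i + 2 * j) y)))
     = m (Ta (2 * i + j) (m (Ta (i - j) x) (Ta (i + 2 * j) y))) (p (3 * (i + j))))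
  (* a^{3i}x . y a^{3j} *)
  /\ (m (m (p (3 * i)) x) (m y (p (3 * j)))
     = m (p (3 * (i + j))) (Ta (- i - 2 * j) (m (Ta (i - j) x) (Ta (i - j) y)))
   /\ m (p (3 * (i + j))) (Ta (- i - 2 * j) (m (Ta (i - j) x) (Ta (i - j) y)))
     = m (Ta (2 * i + j) (m (Ta (i - j) x) (Ta (i - j) y))) (p (3 * (i + j))))
  (* x a^{3i} . a^{3j} y *)
  /\ (m (m x (p (3 * i))) (m (p (3 * j)) y)
     = m (p (3 * (i + j))) (Ta (- i - 2 * j) (m (Ta (- 2 * i - j) x) (Ta (i + 2 * j) y)))
   /\ m (p (3 * (i + j))) (Ta (- i - 2 * j) (m (Ta (- 2 * i - j) x) (Ta (i + 2 * j) y)))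
     = m (Ta (2 * i + j) (m (Ta (- 2 * i - j) x) (Ta (i + 2 * j) y))) (p (3 * (i + j))))
  (* x a^{3i} . y a^{3j} *)
  /\ (m (m x (p (3 * i))) (m y (p (3 * j)))
     = m (p (3 * (i + j))) (Ta (- i - 2 * j) (m (Ta (- 2 * i - j) x) (Ta (i - j) y)))
   /\ m (p (3 * (i + j))) (Ta (- i - 2 * j) (m (Ta (- 2 * i - j) x) (Ta (i - j) y)))
     = m (Ta (2 * i + j) (m (Ta (- 2 * i - j) x) (Ta (i - j) y))) (p (3 * (i + j)))).
Proof.
move=> m p Ta; rewrite {}/m {}/p {}/Ta.
rewrite !(Tpow_LR HM) !(lpow_mull HM) !(lpow_mulr HM) !(LR_comp HM).
rewrite !(LR_mul HM) !(LR_comp HM).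
by repeat split; congr (lmul (LR _ _ _ _) (LR _ _ _ _)); lia.
Qed.
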